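(* Let $\mathbb{F}$ be a field, let $K=\mathbb{F}(a_1,b_1,a_2,b_2,\dots)$ be the purely transcendental extension of $\mathbb{F}$ generated by countably many indeterminates $a_n,b_n$ ($n\ge 1$), let $R=K\llbracket x,y\rrbracket$, and let $\sigma$ be the $\mathbb{F}$-algebra automorphism of $R$ described in the context. Let $G=\langle\sigma\rangle$ be the cyclic group of automorphisms of $R$ generated by $\sigma$. If $K$ has characteristic $p>0$, then $G$ is cyclic of order $p$; if $K$ has characteristic zero, then $G$ is infinite cyclic. In either case, the invariant ring $R^G=\{r\in R:\ g(r)=r \text{ for all } g\in G\}$ is not noetherian.
   Context: Setup: $\mathbb{F}$ is a field; $K=\mathbb{F}(a_1,b_1,a_2,b_2,\dots)$ where the $a_n,b_n$ ($n\ge1$) are algebraically independent indeterminates over $\mathbb{F}$; $R=K\llbracket x,y\rrbracket$ is the formal power series ring in $x,y$ over $K$, with maximal ideal $\mathfrak{m}=(x,y)R$. For $n\ge1$ set $f_n=a_nx+b_ny\in R$. Let $\sigma$ be the $\mathbb{F}$-algebra endomorphism of $R$ with $\sigma(x)=x$, $\sigma(y)=y$, $\sigma(a_n)=a_n+yf_{n+1}$, $\sigma(b_n)=b_n-xf_{n+1}$ for all $n\ge1$. (This is well defined: on $\mathbb{F}[a_1,b_1,\dots][x,y]$ it is given by substitution; nonzero elements of $\mathbb{F}[a_1,b_1,\dots]$ map to elements of $R$ with nonzero constant term, hence units, so the map extends to $K$, and it extends to power series by $\mathfrak{m}$-adic continuity since $\sigma(\mathfrak m)\subseteq\mathfrak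 m$. One has $\sigma(f_n)=f_n$ for all $n$, and $\sigma$ is an automorphism of $R$.) *)

From HB Require Import structures.
From mathcomp Require Import all_boot all_order all_algebra.
From mathcomp Require Import mpoly.
Set Implicit Arguments. Unset Strict Implicit. Unset Printing Implicit Defensive.
Import Order.TTheory GRing.Theory Num.Theory.
Local Open Scope ring_scope.

(* The generators are listed as one sequence v: v (2n) = a_(n+1),
   v (2n+1) = b_(n+1)  (0-based indexing a n = a_(n+1)). *)
Definition genseq (K : Type) (a b : nat -> K) (k : nat) : K :=
  if odd k then b k./2 else a k./2.

Definition evalF (F K : fieldType) (iota : {rmorphism F -> K})
  (v : nat -> K) (n : nat) (P : {mpoly F[n]}) : K :=
  (map_mpoly iota P).@[fun i : 'I_n => v (nat_of_ord i)].

Definition alg_indep (F K : fieldType) (iota : {rmorphism F -> K})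
  (v : nat -> K) : Prop :=
  forall (n : nat) (P : {mpoly F[n]}), evalF iota v P = 0 -> P = 0.

Definition field_generated (F K : fieldType) (iota : {rmorphism F -> K})
  (v : nat -> K) : Prop :=
  forall z : K, exists (n : nat) (P Q : {mpoly F[n]}),
    evalF iota v Q != 0 /\ z = evalF iota v P / evalF iota v Q.

(* a power series is its coefficient function: r i j = coefficient of x^i y^j *)
Definition ser (K : Type) := nat -> nat -> K.

Section Ser.
Variable K : comNzRingType.
Definition sadd (r s : ser K) : ser K := fun i j => r i j + s i j.
Definition sopp (r : ser K) : ser K := fun i j => - r i j.
Definition smul (r s : ser K) : ser K := fun i j =>
  \sum_(k < i.+1) \sum_(l < j.+1) r k l * s (i - k)%N (j - l)%N.
Definition sC (c : K) : ser K := fun i j => if (i == 0%N) && (j == 0%N) then c else 0.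
Definition sX : ser K := fun i j => if (i == 1%N) && (j == 0%N) then 1 else 0.
Definition sY : ser K := fun i j => if (i == 0%N) && (j == 1%N) then 1 else 0.
End Ser.
Arguments sX {K}.
Arguments sY {K}.

Section Noeth.
Variable K : comNzRingType.
Definition is_ideal (S I : ser K -> Prop) : Prop :=
  (forall r, I r -> S r) /\ I (sC 0) /\
  (forall r s, I r -> I s -> I (sadd r s)) /\
  (forall s r, S s -> I r -> I (smul s r)).
Definition noetherian (S : ser K -> Prop) : Prop :=
  forall I : nat -> (ser K -> Prop),
    (forall n, is_ideal S (I n)) ->
    (forall n r, I n r -> I n.+1 r) ->
    exists N, forall n, (N <= n)%N -> forall r, I n r <-> I N r.
End Noeth.

Definition in_cyclic (T : Type) (sigma g : T -> T) : Prop :=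
  exists k : nat,
    (forall r, g r = iter k sigma r) \/
    (forall r, g (iter k sigma r) = r /\ iter k sigma (g r) = r).

Definition invariants (T : Type) (sigma : T -> T) : T -> Prop :=
  fun r => forall g, in_cyclic sigma g -> g r = r.

(* The automorphism sigma fixes x, y and every f_n = a_n x + b_n y, and moves a_n by
   y f_(n+1) (indices start at 0 here).  Hence sigma^k (a_0) = a_0 + k y f_1, which
   pins down the order of sigma; in characteristic p, sigma^p fixes the generators of
   K, hence K, hence all of R = K[[x,y]].

   For non-noetherianity let I_n be the ideal of R^G generated by f_0, ..., f_(n-1).
   On constants sigma is the identity modulo (x, y)^2, and its xy-coefficient is a
   derivation D of K with D a_n = a_(n+1) that kills constant terms of invariants.
   If f_n were in I_n, comparing x-coefficients would give a_n = sum c_i a_i with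
   D c_i = 0; applying D repeatedly gives a linear recurrence for the a_n with
   coefficients in K, impossible for algebraically independent generators.  So the
   chain (I_n) never stabilizes. *)

From HB Require Import structures.
From mathcomp Require Import all_boot all_order all_algebra.
From mathcomp Require Import mpoly.
From Stdlib Require Import FunctionalExtensionality.
Import GRing.Theory.
Local Open Scope ring_scope.
Set Implicit Arguments. Unset Strict Implicit.

Section Series.
Variable K : comNzRingType.
Implicit Types u v w s t : ser K.
Implicit Types c d : K.

Lemma ser_ext u v : (forall i j, u i j = v i j) -> u = v.
Proof. by move=> e; do 2![apply: functional_extensionality => ?]; apply: e. Qed.

Definition shiftX u : ser K := fun i j => if i is i'.+1 then u i' j else 0.
Definition shiftY u : ser K := fun i j => if j is j'.+1 then u i j' else 0.
Definition sscale c u : ser K := fun i j => c * u i j.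

Definition slin c d : ser K := sadd (smul (sC c) sX) (smul (sC d) sY).

Lemma sC0E i j : sC (0 : K) i j = 0.
Proof. by rewrite /sC; case: ifP. Qed.

Lemma shiftXY u : shiftX (shiftY u) = shiftY (shiftX u).
Proof. by apply: ser_ext => -[|i] [|j]. Qed.

Lemma shiftX_add u v : shiftX (sadd u v) = sadd (shiftX u) (shiftX v).
Proof. by apply: ser_ext => -[|i] j; rewrite /sadd /= ?addr0. Qed.

Lemma shiftY_add u v : shiftY (sadd u v) = sadd (shiftY u) (shiftY v).
Proof. by apply: ser_ext => i [|j]; rewrite /sadd /= ?addr0. Qed.

Lemma shiftY_opp u : shiftY (sopp u) = sopp (shiftY u).
Proof. by apply: ser_ext => i [|j]; rewrite /sopp /= ?oppr0. Qed.

Lemma smulC u v : smul u v = smul v u.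
Proof.
apply: ser_ext => i j; rewrite /smul (reindex_inj rev_ord_inj) /=.
apply: eq_bigr => k _; rewrite (reindex_inj rev_ord_inj) /=.
apply: eq_bigr => l _; rewrite !subSS mulrC !subKn //; exact: ltnSE.
Qed.

Lemma smulCl c u : smul (sC c) u = sscale c u.
Proof.
apply: ser_ext => i j; rewrite /smul big_ord_recl [X in X + _]big_ord_recl /= big1; last first.
  by move=> k _; rewrite /sC /= mul0r.
rewrite big1; last by move=> k _; rewrite big1 // => l _; rewrite /sC /= mul0r.
by rewrite /sC /= !subn0 !addr0.
Qed.

Lemma smulXl u : smul sX u = shiftX u.
Proof.
apply: ser_ext => -[|i] j; rewrite /smul /shiftX.
  by rewrite big_ord_recl big_ord0 addr0 big1 // => l _; rewrite /sX /= mul0r.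
rewrite big_ord_recl big1 ?add0r; last by move=> l _; rewrite /sX /= mul0r.
rewrite big_ord_recl [X in _ + X]big1 ?addr0; last first.
  by move=> k _; rewrite big1 // => l _; rewrite /sX /= mul0r.
rewrite big_ord_recl big1 ?addr0; last by move=> l _; rewrite /sX /= mul0r.
by rewrite /sX /= mul1r subn1 subn0.
Qed.

Lemma smulYl u : smul sY u = shiftY u.
Proof.
apply: ser_ext => i j; rewrite /smul /shiftY big_ord_recl [X in _ + X]big1 ?addr0; last first.
  by move=> k _; rewrite big1 // => l _; rewrite /sY /= mul0r.
case: j => [|j]; first by rewrite big_ord_recl big_ord0 addr0 /sY /= mul0r.
rewrite big_ord_recl big_ord_recl [X in _ + (_ + X)]big1 ?addr0; last first.
  by move=> l _; rewrite /sY /= mul0r.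
by rewrite /sY /= mul0r mul1r add0r subn0 /bump /= add1n subn1.
Qed.

Lemma smulXr u : smul u sX = shiftX u.
Proof. by rewrite smulC smulXl. Qed.

Lemma smulYr u : smul u sY = shiftY u.
Proof. by rewrite smulC smulYl. Qed.

Lemma smulDl u v w : smul (sadd u v) w = sadd (smul u w) (smul v w).
Proof.
apply: ser_ext => i j; rewrite /smul /sadd -big_split; apply: eq_bigr => k _.
by rewrite -big_split; apply: eq_bigr => l _; rewrite mulrDl.
Qed.

Lemma smulDr u v w : smul w (sadd u v) = sadd (smul w u) (smul w v).
Proof. by rewrite smulC smulDl !(smulC w). Qed.

Lemma smul_sscale c u v : smul u (sscale c v) = sscale c (smul u v).
Proof.
apply: ser_ext => i j; rewrite /smul /sscale mulr_sumr; apply: eq_bigr => k _.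
by rewrite mulr_sumr; apply: eq_bigr => l _; rewrite mulrCA.
Qed.

Lemma smul_shiftX t s : smul t (shiftX s) = shiftX (smul t s).
Proof.
apply: ser_ext => -[|i] j; rewrite /smul /shiftX.
  by rewrite big1 // => k _; rewrite big1 // => l _; rewrite sub0n mulr0.
rewrite big_ord_recr /= subnn [X in _ + X]big1 ?addr0; last by move=> l _; rewrite mulr0.
apply: eq_bigr => k _; apply: eq_bigr => l _.
by rewrite /= subSn ?(ltnSE (ltn_ord k)).
Qed.

Lemma smul_shiftY t s : smul t (shiftY s) = shiftY (smul t s).
Proof.
apply: ser_ext => i [|j]; rewrite /smul /shiftY.
  by rewrite big1 // => k _; rewrite big1 // => l _; rewrite sub0n mulr0.
apply: eq_bigr => k _; rewrite big_ord_recr /= subnn mulr0 addr0.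
by apply: eq_bigr => l _; rewrite /= subSn ?(ltnSE (ltn_ord l)).
Qed.

Lemma smul_coef00 u v : smul u v 0 0 = u 0%N 0%N * v 0%N 0%N.
Proof. by rewrite /smul !big_ord_recr !big_ord0 /= !add0r. Qed.

Lemma smul_coef10 u v : smul u v 1 0 = u 0%N 0%N * v 1%N 0%N + u 1%N 0%N * v 0%N 0%N.
Proof. by rewrite /smul !big_ord_recr !big_ord0 /= !add0r. Qed.

Lemma smul_coef01 u v : smul u v 0 1 = u 0%N 0%N * v 0%N 1%N + u 0%N 1%N * v 0%N 0%N.
Proof. by rewrite /smul !big_ord_recr !big_ord0 /= !add0r. Qed.

Lemma smul_coef11 u v : smul u v 1 1 = u 0%N 0%N * v 1%N 1%N + u 0%N 1%N * v 1%N 0%N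
  + u 1%N 0%N * v 0%N 1%N + u 1%N 1%N * v 0%N 0%N.
Proof. by rewrite /smul !big_ord_recr !big_ord0 /= !add0r !subn0 !subnn addrA. Qed.

Lemma sCD c d : sC (c + d) = sadd (sC c) (sC d).
Proof. by apply: ser_ext => i j; rewrite /sadd /sC; case: ifP; rewrite ?addr0. Qed.

Lemma sCM c d : sC (c * d) = smul (sC c) (sC d).
Proof. by apply: ser_ext => i j; rewrite smulCl /sscale /sC; case: ifP; rewrite ?mulr0. Qed.

Lemma smul_slin c d u : smul u (slin c d) = sadd (sscale c (shiftX u)) (sscale d (shiftY u)).
Proof. by rewrite /slin !smulCl smulDr !smul_sscale smulXr smulYr. Qed.

Lemma slin_coef00 c d : slin c d 0 0 = 0.
Proof. by rewrite /slin !smulCl /sadd /sscale /sX /sY /= !mulr0 addr0. Qed.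

Lemma slin_coef10 c d : slin c d 1 0 = c.
Proof. by rewrite /slin !smulCl /sadd /sscale /sX /sY /= mulr1 mulr0 addr0. Qed.

Lemma smulA_slin c d t s : smul t (smul s (slin c d)) = smul (smul t s) (slin c d).
Proof. by rewrite !smul_slin smulDr !smul_sscale smul_shiftX smul_shiftY. Qed.

Definition ssum n (G : nat -> ser K) : ser K := fun i j => \sum_(k < n) G k i j.

Lemma ssum0 G : ssum 0 G = sC 0.
Proof. by apply: ser_ext => i j; rewrite /ssum big_ord0 sC0E. Qed.

Lemma ssumS n G : ssum n.+1 G = sadd (ssum n G) (G n).
Proof. by apply: ser_ext => i j; rewrite /ssum big_ord_recr. Qed.

Lemma eq_ssum n G H : (forall k, G k = H k) -> ssum n G = ssum n H.
Proof. by move=> eGH; apply: ser_ext => i j; rewrite /ssum; apply: eq_bigr => k _; rewrite eGH. Qed.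

Lemma ssumD n G H : sadd (ssum n G) (ssum n H) = ssum n (fun k => sadd (G k) (H k)).
Proof. by apply: ser_ext => i j; rewrite /ssum /sadd big_split. Qed.

Lemma smul_ssum n G t : smul t (ssum n G) = ssum n (fun k => smul t (G k)).
Proof.
elim: n => [|n IH]; last by rewrite !ssumS smulDr IH.
by rewrite !ssum0 smulC smulCl; apply: ser_ext => i j; rewrite /sscale !sC0E mul0r.
Qed.

Definition restX u : ser K := fun i j => u i.+1 j.
Definition restY u : ser K := fun i j => if i is 0%N then u 0%N j.+1 else 0.

Lemma series_decomp u :
  u = sadd (sC (u 0%N 0%N)) (sadd (shiftX (restX u)) (shiftY (restY u))).
Proof.
by apply: ser_ext => -[|i] [|j]; rewrite /sadd /sC /shiftX /shiftY /restX /restY /= ?addr0 ?add0r.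
Qed.

Section Endomorphism.
Variable tau : ser K -> ser K.
Hypothesis tauD : forall r s, tau (sadd r s) = sadd (tau r) (tau s).
Hypothesis tauM : forall r s, tau (smul r s) = smul (tau r) (tau s).
Hypothesis tauX : tau sX = sX.
Hypothesis tauY : tau sY = sY.

Lemma endo_decomp u :
  tau u = sadd (tau (sC (u 0%N 0%N))) (sadd (shiftX (tau (restX u))) (shiftY (tau (restY u)))).
Proof. by rewrite {1}(series_decomp u) -smulXl -smulYl !tauD !tauM tauX tauY smulXl smulYl. Qed.

Lemma endo_id_of_fixed_constants : (forall c, tau (sC c) = sC c) -> forall u, tau u = u.
Proof.
move=> tauC; suff deg_ind n u i j : (i + j < n)%N -> tau u i j = u i j.
  by move=> u; apply: ser_ext => i j; apply: (deg_ind (i + j).+1).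
elim: n u i j => [//|n IH] u i j hij.
rewrite endo_decomp tauC [in RHS](series_decomp u) /sadd; congr (_ + (_ + _)).
  by case: i hij => [|i] hij //=; apply: IH; rewrite addSn ltnS in hij.
by case: j hij => [|j] hij //=; apply: IH; rewrite addnS ltnS in hij.
Qed.
End Endomorphism.
End Series.

Lemma iter_morph2 T (tau : T -> T) (op : T -> T -> T) :
  (forall r s, tau (op r s) = op (tau r) (tau s)) ->
  forall k r s, iter k tau (op r s) = op (iter k tau r) (iter k tau s).
Proof. by move=> tau_op k r s; elim: k => //= k ->. Qed.

Lemma genseq_even (T : Type) (a b : nat -> T) k : genseq a b k.*2 = a k.
Proof. by rewrite /genseq odd_double doubleK. Qed.

Section Evaluation.
Variables (F K : fieldType) (iota : {rmorphism F -> K}).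
Implicit Types w : nat -> K.

Lemma evalF0 m w : evalF iota w (0 : {mpoly F[m]}) = 0.
Proof. by rewrite /evalF rmorph0 meval0. Qed.

Lemma evalF1 m w : evalF iota w (1 : {mpoly F[m]}) = 1.
Proof. by rewrite /evalF rmorph1 meval1. Qed.

Lemma evalFD m w (P Q : {mpoly F[m]}) :
  evalF iota w (P + Q) = evalF iota w P + evalF iota w Q.
Proof. by rewrite /evalF rmorphD mevalD. Qed.

Lemma evalFM m w (P Q : {mpoly F[m]}) :
  evalF iota w (P * Q) = evalF iota w P * evalF iota w Q.
Proof. by rewrite /evalF rmorphM mevalM. Qed.

Lemma evalFB m w (P Q : {mpoly F[m]}) :
  evalF iota w (P - Q) = evalF iota w P - evalF iota w Q.
Proof. by rewrite /evalF rmorphB mevalB. Qed.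

Lemma evalF_sum m w (I : Type) (r : seq I) (Pr : pred I) (G : I -> {mpoly F[m]}) :
  evalF iota w (\sum_(i <- r | Pr i) G i) = \sum_(i <- r | Pr i) evalF iota w (G i).
Proof. exact: (big_morph _ (evalFD w) (evalF0 _ w)). Qed.

Lemma evalFX m w (i : 'I_m) : evalF iota w 'X_i = w i.
Proof. by rewrite /evalF map_mpolyX mevalXU. Qed.

Lemma eq_evalF m w w' (P : {mpoly F[m]}) :
  (forall k, (k < m)%N -> w k = w' k) -> evalF iota w P = evalF iota w' P.
Proof. by move=> e; apply: meval_eq => i /=; apply: e. Qed.

Lemma evalF_widen m T (P : {mpoly F[m]}) : (m <= T)%N ->
  exists P' : {mpoly F[T]}, forall w, evalF iota w P' = evalF iota w P.
Proof.
move=> hmT; elim/mpolyind: P => [|c mm p _ _ [p' hp']].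
  by exists 0 => w; rewrite !evalF0.
exists (c *: \prod_(i < m) 'X_(widen_ord hmT i) ^+ (mm i) + p') => w.
rewrite /evalF !rmorphD /= !map_mpolyZ map_mpolyX !mevalZ mevalX.
rewrite -/(evalF iota w p') hp' /evalF; congr (_ * _ + _).
rewrite !rmorph_prod /=; apply: eq_bigr => i _.
by rewrite !rmorphXn /= map_mpolyX mevalXU.
Qed.

Variable v : nat -> K.

Lemma evalF_ind (P : K -> Prop) :
  (forall c, P (iota c)) -> (forall k, P (v k)) ->
  (forall x y, P x -> P y -> P (x + y)) -> (forall x y, P x -> P y -> P (x * y)) ->
  forall m (Q : {mpoly F[m]}), P (evalF iota v Q).
Proof.
move=> Pc Pv PD PM m Q; elim/mpolyind: Q => [|c mm q _ _ IH].
  by rewrite evalF0 -(rmorph0 iota); apply: Pc.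
move: IH; rewrite /evalF rmorphD /= map_mpolyZ map_mpolyX mevalD mevalZ mevalX => IH.
apply: (PD _ _ _ IH); apply: (PM _ _ (Pc c)).
apply: (big_ind P); [by rewrite -(rmorph1 iota) | exact: PM | ].
move=> i _; elim: (mm i) => [|e IHe]; first by rewrite expr0 -(rmorph1 iota).
by rewrite exprS; apply: PM.
Qed.

Hypothesis vgen : field_generated iota v.

Lemma field_generated_ind (P : K -> Prop) :
  (forall c, P (iota c)) -> (forall k, P (v k)) ->
  (forall x y, P x -> P y -> P (x + y)) -> (forall x y, P x -> P y -> P (x * y)) ->
  (forall x, x != 0 -> P x -> P x^-1) -> forall z, P z.
Proof.
move=> Pc Pv PD PM PV z; have [m [Q1 [Q2 [hQ2 ->]]]] := vgen z.
have PQ m (Q : {mpoly F[m]}) : P (evalF iota v Q) := evalF_ind Pc Pv PD PM Q.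
exact: PM (PQ _ _) (PV _ hQ2 (PQ _ _)).
Qed.

Lemma common_denominator (c : nat -> K) n : exists M, forall T, (M <= T)%N ->
  exists (Q : {mpoly F[T]}) (P : nat -> {mpoly F[T]}),
    [/\ evalF iota v Q != 0,
        (forall w, (forall k, (k < M)%N -> w k = v k) -> evalF iota w Q = evalF iota v Q) &
        forall i, (i < n)%N -> c i * evalF iota v Q = evalF iota v (P i)].
Proof.
elim: n => [|n [M0 HM0]].
  exists 0%N => T _; exists 1, (fun _ => 0); split=> //; last by move=> w _; rewrite !evalF1.
  by rewrite evalF1 oner_neq0.
have [m [P1 [Q1 [hQ1 hc]]]] := vgen (c n).
exists (maxn M0 m) => T hT.
have [Q [P [hQ hQloc hP]]] := HM0 T (leq_trans (leq_maxl _ _) hT).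
have [P1' hP1'] := evalF_widen P1 (leq_trans (leq_maxr _ _) hT).
have [Q1' hQ1'] := evalF_widen Q1 (leq_trans (leq_maxr _ _) hT).
exists (Q * Q1'), (fun i => if i == n then P1' * Q else P i * Q1'); split.
- by rewrite evalFM hQ1' mulf_neq0.
- move=> w hw; rewrite !evalFM !hQ1' hQloc => [|k hk]; last by apply: hw; rewrite leq_max hk.
  by congr (_ * _); apply: eq_evalF => k hk; apply: hw; rewrite leq_max hk orbT.
- move=> i; rewrite ltnS leq_eqVlt => /orP [/eqP -> | hi].
    by rewrite eqxx !evalFM hQ1' hP1' hc [X in _ * X]mulrC mulrA divfK.
  by rewrite (ltn_eqF hi) !evalFM mulrA hP.
Qed.

Hypothesis vindep : alg_indep iota v.

Lemma alg_indep_neq0 k : v k != 0.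
Proof.
apply/eqP => vk0.
have X0 : ('X_(inord k) : {mpoly F[k.+1]}) = 0 by apply: vindep; rewrite evalFX inordK.
move: (congr1 (@evalF _ _ iota (fun _ => 1) k.+1) X0).
by rewrite evalFX evalF0 => /eqP; rewrite oner_eq0.
Qed.

(* Clearing the denominator of the coefficients turns the recurrence at a large
   enough index into a polynomial relation; it is nontrivial because its
   leading variable does not occur in the denominator. *)
Lemma no_linear_recurrence (h : nat -> nat) n (c : nat -> K) :
  {homo h : i j / (i < j)%N} ->
  ~ (forall j, v (h (n + j)%N) = \sum_(i < n) c i * v (h (i + j)%N)).
Proof.
move=> hinc hrec; have hge j : (j <= h j)%N.
  by elim: j => // j IH; apply: leq_ltn_trans IH (hinc j j.+1 _).
have [M HM] := common_denominator c n.
pose T := (h (n + M)%N).+1.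
have [Q [P [hQ hQloc hP]]] := HM T (leq_trans (leq_addl n M) (leq_trans (hge _) (leqnSn _))).
have hlt i : (i < n)%N -> (h (i + M)%N < h (n + M)%N)%N.
  by move=> hi; apply: hinc; rewrite ltn_add2r.
pose R : {mpoly F[T]} :=
  Q * 'X_(inord (h (n + M)%N)) - \sum_(i < n) P i * 'X_(inord (h (i + M)%N)).
have evR w : evalF iota w R =
    evalF iota w Q * w (h (n + M)%N) - \sum_(i < n) evalF iota w (P i) * w (h (i + M)%N).
  rewrite evalFB evalFM evalFX inordK // evalF_sum; congr (_ - _).
  apply: eq_bigr => i _; rewrite evalFM evalFX inordK //.
  exact: ltn_trans (hlt i (ltn_ord i)) (ltnSn _).
have R0 : R = 0.
  apply: vindep; rewrite evR (hrec M) mulr_sumr -sumrB big1 // => i _.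
  by rewrite -(hP i (ltn_ord i)) mulrA [_ * c i]mulrC subrr.
pose w0 k := if (k < M)%N then v k else if k == h (n + M)%N then 1 else 0.
have hw0 k : (k < M)%N -> w0 k = v k by rewrite /w0 => ->.
have hbig i : (h (i + M)%N < M)%N = false.
  by apply/negbTE; rewrite -leqNgt (leq_trans (leq_addl i M) (hge _)).
move: (evR w0); rewrite R0 evalF0 hQloc // big1 => [|i _]; last first.
  by rewrite [w0 _]/w0 hbig (ltn_eqF (hlt i (ltn_ord i))) mulr0.
by rewrite [w0 _]/w0 hbig eqxx mulr1 subr0 => /esym/eqP; rewrite (negbTE hQ).
Qed.
End Evaluation.

Section Sigma.
Variables (F K : fieldType) (iota : {rmorphism F -> K}) (a b : nat -> K).
Hypothesis hindep : alg_indep iota (genseq a b).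
Hypothesis hgen : field_generated iota (genseq a b).
Variable sigma : ser K -> ser K.
Hypothesis sigmaD : forall r s, sigma (sadd r s) = sadd (sigma r) (sigma s).
Hypothesis sigmaM : forall r s, sigma (smul r s) = smul (sigma r) (sigma s).
Hypothesis sigma1 : sigma (sC 1) = sC 1.
Hypothesis sigmaF : forall c : F, sigma (sC (iota c)) = sC (iota c).
Hypothesis sigmaX : sigma sX = sX.
Hypothesis sigmaY : sigma sY = sY.
Hypothesis sigma_a : forall n,
  sigma (sC (a n)) = sadd (sC (a n)) (smul sY (slin (a n.+1) (b n.+1))).
Hypothesis sigma_b : forall n,
  sigma (sC (b n)) = sadd (sC (b n)) (sopp (smul sX (slin (a n.+1) (b n.+1)))).

Local Notation f n := (slin (a n) (b n)).

Lemma sigma0 : sigma (sC 0) = sC 0.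
Proof. by rewrite -(rmorph0 iota) sigmaF. Qed.

Lemma sigmaN u : sigma (sopp u) = sopp (sigma u).
Proof.
apply: ser_ext => i j; apply/eqP; rewrite -subr_eq0 /sopp opprK.
have := congr1 (fun w => w i j) (sigmaD u (sopp u)).
have -> : sadd u (sopp u) = sC 0 by apply: ser_ext => p q; rewrite /sadd /sopp subrr sC0E.
by rewrite sigma0 sC0E /sadd /sopp addrC => <-.
Qed.

Lemma sigma_slin n : sigma (f n) = f n.
Proof.
set g := slin (a n.+1) (b n.+1).
rewrite /slin sigmaD !sigmaM sigmaX sigmaY sigma_a sigma_b !smulXr !smulYr smulXl smulYl.
rewrite shiftX_add shiftY_add shiftY_opp shiftXY.
by apply: ser_ext => i j; rewrite /sadd /sopp addrACA subrr addr0.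
Qed.

Lemma iter_sigma_a n k :
  iter k sigma (sC (a n)) = sadd (sC (a n)) (sscale k%:R (smul sY (f n.+1))).
Proof.
elim: k => [|k IH].
  by apply: ser_ext => i j; rewrite /sadd /sscale mul0r addr0.
rewrite iterSr sigma_a (iter_morph2 sigmaD) IH iter_fix; last first.
  by rewrite sigmaM sigmaY sigma_slin.
by apply: ser_ext => i j; rewrite /sadd /sscale -addrA mulrSr mulrDl mul1r.
Qed.

Lemma iter_sigma_b n k :
  iter k sigma (sC (b n)) = sadd (sC (b n)) (sscale k%:R (sopp (smul sX (f n.+1)))).
Proof.
elim: k => [|k IH].
  by apply: ser_ext => i j; rewrite /sadd /sscale mul0r addr0.
rewrite iterSr sigma_b (iter_morph2 sigmaD) IH iter_fix; last first.
  by rewrite sigmaN sigmaM sigmaX sigma_slin.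
by apply: ser_ext => i j; rewrite /sadd /sscale -addrA mulrSr mulrDl mul1r.
Qed.

Lemma sigma_sC_low c :
  [/\ sigma (sC c) 0 0 = c, sigma (sC c) 1 0 = 0 & sigma (sC c) 0 1 = 0].
Proof.
move: c; apply: (field_generated_ind hgen).
- by move=> c; rewrite sigmaF /sC.
- move=> k; rewrite /genseq; case: odd.
    by rewrite sigma_b smulXl /sadd /sopp /sC /shiftX /= slin_coef00 oppr0 !addr0.
  by rewrite sigma_a smulYl /sadd /sC /shiftY /= slin_coef00 !addr0.
- move=> c d [c00 c10 c01] [d00 d10 d01].
  by rewrite sCD sigmaD /sadd c00 c10 c01 d00 d10 d01 addr0.
- move=> c d [c00 c10 c01] [d00 d10 d01].
  rewrite sCM sigmaM smul_coef00 smul_coef10 smul_coef01.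
  by rewrite c00 c10 c01 d00 d10 d01 !mulr0 !mul0r addr0.
- move=> c c_neq0 [c00 c10 c01].
  have e : smul (sigma (sC c)) (sigma (sC c^-1)) = sC 1 by rewrite -sigmaM -sCM divff.
  have := congr1 (fun w => w 0%N 0%N) e; have := congr1 (fun w => w 1%N 0%N) e.
  have := congr1 (fun w => w 0%N 1%N) e.
  rewrite /= smul_coef00 smul_coef10 smul_coef01 c00 c10 c01 !mul0r !addr0 /sC /=.
  move=> /eqP; rewrite mulf_eq0 (negbTE c_neq0) => /eqP e01.
  move=> /eqP; rewrite mulf_eq0 (negbTE c_neq0) => /eqP e10 e00.
  by split=> //; apply: (mulfI c_neq0); rewrite e00 divff.
Qed.

Let sigma_decomp := endo_decomp sigmaD sigmaM sigmaX sigmaY.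

Lemma sigma_coef00 u : sigma u 0 0 = u 0%N 0%N.
Proof. by rewrite sigma_decomp /sadd /shiftX /shiftY !addr0; case: (sigma_sC_low (u 0%N 0%N)). Qed.

Lemma sigma_coef10 u : sigma u 1 0 = u 1%N 0%N.
Proof.
rewrite sigma_decomp /sadd /shiftX /shiftY /= sigma_coef00.
by case: (sigma_sC_low (u 0%N 0%N)) => _ -> _; rewrite add0r addr0.
Qed.

Lemma sigma_coef01 u : sigma u 0 1 = u 0%N 1%N.
Proof.
rewrite sigma_decomp /sadd /shiftX /shiftY /= sigma_coef00.
by case: (sigma_sC_low (u 0%N 0%N)) => _ _ ->; rewrite !add0r.
Qed.

Lemma sigma_coef11 u : sigma u 1 1 = sigma (sC (u 0%N 0%N)) 1 1 + u 1%N 1%N.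
Proof.
by rewrite [sigma u]sigma_decomp /sadd /shiftX /shiftY /= sigma_coef01 sigma_coef10 addr0.
Qed.

Definition der c := sigma (sC c) 1 1.

Lemma derD c d : der (c + d) = der c + der d.
Proof. by rewrite /der sCD sigmaD. Qed.

Lemma der_sum (I : Type) (r : seq I) (P : pred I) (G : I -> K) :
  der (\sum_(i <- r | P i) G i) = \sum_(i <- r | P i) der (G i).
Proof.
have der0 : der 0 = 0 by rewrite /der sigma0 sC0E.
exact: (big_morph der derD der0).
Qed.

Lemma derM c d : der (c * d) = c * der d + der c * d.
Proof.
have [c00 c10 c01] := sigma_sC_low c; have [d00 d10 d01] := sigma_sC_low d.
by rewrite /der sCM sigmaM smul_coef11 c00 c10 c01 d00 d10 d01 !mul0r !addr0.
Qed.

Lemma der_a n : der (a n) = a n.+1.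
Proof. by rewrite /der sigma_a smulYl /sadd /sC /shiftY /= slin_coef10 add0r. Qed.

Lemma der_fixed u : sigma u = u -> der (u 0%N 0%N) = 0.
Proof.
move=> fix_u; have := sigma_coef11 u; rewrite fix_u /der => /eqP.
by rewrite -subr_eq subrr eq_sym => /eqP.
Qed.

Lemma iter_sigma_neq_id k : k%:R != 0 :> K -> ~ (forall r, iter k sigma r = r).
Proof.
move=> k_neq0 sigmak_id; have := congr1 (fun w => w 1%N 1%N) (sigmak_id (sC (a 0))).
rewrite iter_sigma_a /sadd /sscale smulYl /sC /shiftY /= slin_coef10 add0r => /eqP.
by rewrite mulf_eq0 (negbTE k_neq0) (negbTE (alg_indep_neq0 hindep 2)).
Qed.

Lemma iter_sigma_pchar p : p%:R = 0 :> K -> forall r, iter p sigma r = r.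
Proof.
move=> p0; apply: endo_id_of_fixed_constants.
- exact: iter_morph2.
- exact: iter_morph2.
- exact: iter_fix.
- exact: iter_fix.
apply: (field_generated_ind hgen).
- by move=> c; apply: iter_fix.
- move=> k; rewrite /genseq; case: odd; rewrite ?iter_sigma_a ?iter_sigma_b p0;
    by apply: ser_ext => i j; rewrite /sadd /sscale mul0r addr0.
- by move=> c d hc hd; rewrite sCD iter_morph2 // hc hd.
- by move=> c d hc hd; rewrite sCM iter_morph2 // hc hd.
- move=> c c_neq0 hc.
  have e : smul (sC c) (iter p sigma (sC c^-1)) = sC 1.
    by rewrite -{1}hc -iter_morph2 // -sCM divff // iter_fix.
  apply: ser_ext => i j; have := congr1 (fun w => w i j) e.
  rewrite /= smulCl /sscale => e'.
  rewrite -[LHS]mul1r -(mulVf c_neq0) -mulrA e' /sC.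
  by case: ifP; rewrite ?mulr1 ?mulr0.
Qed.

Lemma invariantsP r : invariants sigma r <-> sigma r = r.
Proof.
split=> [inv_r | fix_r g [k [-> | gk]]]; first by apply: inv_r; exists 1%N; left.
  exact: iter_fix.
by have [gr _] := gk r; rewrite iter_fix in gr.
Qed.

Definition gen_ideal n (r : ser K) : Prop := exists s : nat -> ser K,
  (forall i, sigma (s i) = s i) /\ r = ssum n (fun i => smul (s i) (f i)).

Lemma gen_ideal_is_ideal n : is_ideal (invariants sigma) (gen_ideal n).
Proof.
split; [|split; [|split]].
- move=> r [s [fix_s ->]]; apply/invariantsP.
  elim: n => [|n IH]; first by rewrite ssum0 sigma0.
  by rewrite ssumS sigmaD IH sigmaM fix_s sigma_slin.
- exists (fun _ => sC 0); split=> [i|]; first exact: sigma0.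
  apply: ser_ext => i j; rewrite sC0E /ssum big1 // => k _.
  by rewrite smulCl /sscale mul0r.
- move=> r t [s [fix_s ->]] [s' [fix_s' ->]].
  exists (fun i => sadd (s i) (s' i)); split=> [i|]; first by rewrite sigmaD fix_s fix_s'.
  by rewrite ssumD; apply: eq_ssum => i; rewrite smulDl.
- move=> t r /invariantsP fix_t [s [fix_s ->]].
  exists (fun i => smul t (s i)); split=> [i|]; first by rewrite sigmaM fix_t fix_s.
  by rewrite smul_ssum; apply: eq_ssum => i; rewrite smulA_slin.
Qed.

Lemma gen_ideal_S n r : gen_ideal n r -> gen_ideal n.+1 r.
Proof.
move=> [s [fix_s ->]]; exists (fun i => if (i < n)%N then s i else sC 0); split.
  by move=> i; case: ifP => _; [apply: fix_s | apply: sigma0].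
rewrite ssumS ltnn smulCl; apply: ser_ext => i j.
by rewrite /sadd /sscale mul0r addr0 /ssum; apply: eq_bigr => k _; rewrite ltn_ord.
Qed.

Lemma slin_gen_ideal n : gen_ideal n.+1 (f n).
Proof.
exists (fun i => if i == n then sC 1 else sC 0); split.
  by move=> i; case: ifP => _; [apply: sigma1 | apply: sigma0].
rewrite ssumS eqxx smulCl; apply: ser_ext => i j.
rewrite /sadd /sscale mul1r /ssum big1 ?add0r // => k _.
by rewrite (ltn_eqF (ltn_ord k)) smulCl /sscale mul0r.
Qed.

Lemma slin_notin_gen_ideal n : ~ gen_ideal n (f n).
Proof.
move=> [s [fix_s fn_eq]]; pose c i := s i 0%N 0%N.
have der_c i : der (c i) = 0 by apply: der_fixed.
apply: (no_linear_recurrence hgen hindep (h := double) (n := n) (c := c)) => [i j|].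
  by rewrite ltn_double.
suff rec j : a (n + j) = \sum_(i < n) c i * a (i + j).
  by move=> j; rewrite genseq_even rec; apply: eq_bigr => i _; rewrite genseq_even.
elim: j => [|j IH].
  have := congr1 (fun w => w 1%N 0%N) fn_eq; rewrite /= slin_coef10 addn0 => ->.
  apply: eq_bigr => i _; rewrite smul_slin /sadd /sscale /shiftX /shiftY /=.
  by rewrite mulr0 addr0 mulrC addn0.
have := congr1 der IH; rewrite der_a der_sum addnS => ->.
by apply: eq_bigr => i _; rewrite derM der_c mul0r addr0 der_a addnS.
Qed.

Lemma invariants_not_noetherian : ~ noetherian (invariants sigma).
Proof.
move=> noeth; have [N stable] := noeth gen_ideal gen_ideal_is_ideal gen_ideal_S.
exact/(slin_notin_gen_ideal (n := N))/(stable N.+1 (leqnSn N))/slin_gen_ideal.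
Qed.
End Sigma.

Theorem mainTheorem1 (F K : fieldType) (iota : {rmorphism F -> K})
  (a b : nat -> K)
  (hindep : alg_indep iota (genseq a b))
  (hgen : field_generated iota (genseq a b))
  (sigma : ser K -> ser K)
  (hadd : forall r s, sigma (sadd r s) = sadd (sigma r) (sigma s))
  (hmul : forall r s, sigma (smul r s) = smul (sigma r) (sigma s))
  (hone : sigma (sC 1) = sC 1)
  (hF : forall c : F, sigma (sC (iota c)) = sC (iota c))
  (hx : sigma sX = sX) (hy : sigma sY = sY)
  (ha : forall n, sigma (sC (a n)) =
          sadd (sC (a n))
               (smul sY (sadd (smul (sC (a n.+1)) sX) (smul (sC (b n.+1)) sY))))
  (hb : forall n, sigma (sC (b n)) =
          sadd (sC (b n))
               (sopp (smul sX (sadd (smul (sC (a n.+1)) sX) (smul (sC (b n.+1)) sY))))) :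
  (forall p : nat, p \in [pchar K] ->
     (forall r, iter p sigma r = r) /\
     (forall k : nat, (0 < k < p)%N -> ~ (forall r, iter k sigma r = r))) /\
  ([pchar K] =i pred0 ->
     forall k : nat, (0 < k)%N -> ~ (forall r, iter k sigma r = r)) /\
  ~ noetherian (invariants sigma).
Proof.
have sigma_not_id k := iter_sigma_neq_id hindep hadd hmul hx hy ha hb (k := k).
split; [|split].
- move=> p char_p; split.
    exact: (iter_sigma_pchar hgen hadd hmul hone hF hx hy ha hb (pcharf0 char_p)).
  move=> k /andP [k_gt0 k_lt_p]; apply: sigma_not_id.
  by rewrite -(dvdn_pcharf char_p) gtnNdvd.
- by move=> /pcharf0P char0 k k_gt0; apply: sigma_not_id; rewrite char0 -lt0n.
- exact: (invariants_not_noetherian hindep hgen hadd hmul hone hF hx hy ha hb).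
Qed.
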